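(* Let $(M,\rho)$ be a metric space, $f:[a,b]\to M$ arbitrary, and let $E\subset[a,b]$ be a Lebesgue measurable set such that $md(f,x)$ exists and is finite for every $x\in E$ (and $x\mapsto md(f,x)$ is measurable on $E$). Then $$\mathcal H^1(f(E))\le\int_E md(f,x)\,dx.$$
   Context: For $f:[a,b]\to(M,\rho)$ and $x\in[a,b]$, $md(f,x)=\lim_{t\to0,\ x+t\in[a,b]}\rho(f(x+t),f(x))/|t|$ when the limit exists. $\mathcal H^1$ is the one-dimensional Hausdorff measure on $M$. The integral of the nonnegative function may be $+\infty$. *)

From HB Require Import structures.
From mathcomp Require Import all_boot all_order all_algebra.
From mathcomp Require Import all_classical all_reals all_analysis.
Set Implicit Arguments.
Unset Strict Implicit.
Unset Printing Implicit Defensive.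
Import Order.TTheory GRing.Theory Num.Theory.
Import numFieldNormedType.Exports.
Local Open Scope classical_set_scope.
Local Open Scope ring_scope.

Definition is_metric (R : realType) (M : Type) (rho : M -> M -> R) : Prop :=
  (forall x y, 0 <= rho x y) /\
  (forall x y, rho x y = 0 <-> x = y) /\
  (forall x y, rho x y = rho y x) /\
  (forall x y z, rho x z <= rho x y + rho y z).

(* Diameter of a set (0 for the empty set), possibly +oo. *)
Definition diam (R : realType) (M : Type) (rho : M -> M -> R) (C : set M)
  : \bar R :=
  ereal_sup ([set 0%E] `|` [set (rho x y)%:E | x in C & y in C]).

Definition hausdorff1_delta (R : realType) (M : Type) (rho : M -> M -> R)
  (delta : R) (A : set M) : \bar R :=
  ereal_inf [set (\sum_(0 <= i <oo) diam rho (C i))%E | C in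
    [set C : nat -> set M | A `<=` \bigcup_i C i /\
                            forall i, (diam rho (C i) <= delta%:E)%E]].

(* One-dimensional Hausdorff measure H^1 = lim_{delta -> 0+} H^1_delta
   = sup_{delta > 0} H^1_delta (the approximations are nonincreasing in delta). *)
Definition hausdorff1 (R : realType) (M : Type) (rho : M -> M -> R)
  (A : set M) : \bar R :=
  ereal_sup [set hausdorff1_delta rho delta A | delta in [set d : R | 0 < d]].

Definition has_metric_derivative (R : realType) (M : Type)
  (rho : M -> M -> R) (f : R -> M) (a b x L : R) : Prop :=
  forall eps : R, 0 < eps -> exists2 delta : R, 0 < delta &
    forall t : R, t != 0 -> a <= x + t <= b -> `|t| < delta ->
      `| rho (f (x + t)) (f x) / `|t| - L | < eps.

(* The sigma-algebra of Lebesgue measurable subsets of R (the completion),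
   carrying [completed_lebesgue_measure]. *)
Notation lebType R := (caratheodory_type (R:=R) (wlength (@idfun R))^*%mu).

From HB Require Import structures.
From mathcomp Require Import all_boot all_order all_algebra.
From mathcomp Require Import all_classical all_reals all_analysis.
From mathcomp Require Import measurable_realfun lra.
Import Order.TTheory GRing.Theory Num.Theory.
Import numFieldNormedType.Exports.
Local Open Scope classical_set_scope.
Local Open Scope ring_scope.

(* Fix delta > 0 and eps > 0, and slice E into the measurable sets
   E_j = {x in E | j eps <= md x < (j+1) eps}, on which f is pointwise
   (j+2) eps-Lipschitz.  The small rational balls B around points of E_j whose
   images f(E_j /\ B) have diameter at most (j+3) eps |B| form a Vitali cover
   of E_j; the disjoint subfamily given by Vitali's theorem, taken inside an
   open set of measure close to |E_j|, yields
   H^1_delta(f(E_j)) <= (j+3) eps |E_j| + eps 2^-(j+1), because the part of E_j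
   it misses is null, and pointwise Lipschitz maps send null sets to
   H^1_delta-null sets.  Summing over j gives
   H^1_delta(f(E)) <= int_E md + 3 eps |E| + eps. *)

Lemma nneseries_ge_term {R : realType} {u : (\bar R)^nat} (k : nat) :
  (forall n, 0 <= u n)%E -> (u k <= \sum_(0 <= n <oo) u n)%E.
Proof.
move=> u0; apply: le_trans (nneseries_lim_ge k.+1 (fun n _ _ => u0 n)).
by rewrite big_nat_recr//= leeDr// sume_ge0.
Qed.

Section hausdorff_content.
Context {R : realType} {M : Type} (rho : M -> M -> R).
Local Open Scope ereal_scope.

Lemma diam_ge0 (C : set M) : 0 <= diam rho C.
Proof. by apply: ereal_sup_ubound; left. Qed.

Lemma diam_le (C : set M) (c : R) : (0 <= c)%R ->
  (forall x y, C x -> C y -> (rho x y <= c)%R) -> diam rho C <= c%:E.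
Proof.
move=> c0 Cc; apply: ge_ereal_sup => _ [->|[x Cx [y Cy <-]]]; rewrite lee_fin//.
exact: Cc.
Qed.

Lemma diam_set0 : diam rho set0 = 0.
Proof. by apply/eqP; rewrite eq_le diam_ge0 andbT diam_le. Qed.

Lemma diam_le_ball {C : set M} (z : M) {c : R} : is_metric rho -> (0 <= c)%R ->
  (forall x, C x -> (rho x z <= c)%R) -> diam rho C <= (c *+ 2)%:E.
Proof.
move=> [_ [_ [rhoC rho_tri]]] c0 Cz; apply: diam_le; first by rewrite mulrn_wge0.
move=> x y Cx Cy; apply: le_trans (rho_tri x z y) _.
by rewrite mulr2n lerD ?Cz// rhoC Cz.
Qed.

Lemma hausdorff1_delta_le_cover (d : R) (S : set M) (C : nat -> set M) :
  S `<=` \bigcup_i C i -> (forall i, diam rho (C i) <= d%:E) ->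
  hausdorff1_delta rho d S <= \sum_(0 <= i <oo) diam rho (C i).
Proof. by move=> SC Cd; apply: ereal_inf_lbound; exists C. Qed.

Lemma hausdorff1_delta_ge0 (d : R) (S : set M) : 0 <= hausdorff1_delta rho d S.
Proof.
apply: le_ereal_inf_tmp => _ [C _ <-].
by apply: nneseries_ge0 => *; exact: diam_ge0.
Qed.

Lemma le_hausdorff1_delta (d : R) {S T : set M} :
  S `<=` T -> hausdorff1_delta rho d S <= hausdorff1_delta rho d T.
Proof.
move=> ST; apply: ereal_inf_le_tmp => _ [C [TC Cd] <-]; exists C => //.
by split=> //; exact: subset_trans TC.
Qed.

Lemma hausdorff1_delta_set0 (d : R) : (0 <= d)%R -> hausdorff1_delta rho d set0 = 0.
Proof.
move=> d0; apply/eqP; rewrite eq_le hausdorff1_delta_ge0 andbT.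
apply: le_trans (@hausdorff1_delta_le_cover d set0 (fun=> set0) _ _) _ => //.
  by move=> _; rewrite diam_set0 lee_fin.
by rewrite eseries0// => *; rewrite diam_set0.
Qed.

Lemma hausdorff1_delta_near_cover {d e : R} {S : set M} : (0 < e)%R ->
  hausdorff1_delta rho d S \is a fin_num -> exists C : nat -> set M,
    [/\ S `<=` \bigcup_i C i, forall i, diam rho (C i) <= d%:E &
        \sum_(0 <= i <oo) diam rho (C i) <= hausdorff1_delta rho d S + e%:E].
Proof.
move=> e0 /(lb_ereal_inf_adherent e0)[_ [C [SC Cd] <-] CS].
by exists C; split=> //; exact: ltW.
Qed.

(* Glue near-optimal covers of the [S k], with slack [e / 2^(k+1)], along a
   bijection [nat <-> nat * nat]. *)
Lemma hausdorff1_delta_sigma_subadditive (d : R) (S : nat -> set M) :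
  hausdorff1_delta rho d (\bigcup_k S k) <=
  \sum_(0 <= k <oo) hausdorff1_delta rho d (S k).
Proof.
have H0 k : 0 <= hausdorff1_delta rho d (S k) by exact: hausdorff1_delta_ge0.
have [->|/negPf sum_fin] := eqVneq (\sum_(0 <= k <oo) hausdorff1_delta rho d (S k)) +oo.
  by rewrite leey.
have Sfin k : hausdorff1_delta rho d (S k) \is a fin_num.
  rewrite ge0_fin_numE// (le_lt_trans (nneseries_ge_term k H0))//.
  by rewrite ltey sum_fin.
apply/lee_addgt0Pr => e e0.
have e2 k : (0 < e / (2 ^ k.+1)%:R)%R by rewrite divr_gt0// ltr0n expn_gt0.
have /choice[C Ck] k := hausdorff1_delta_near_cover (e2 k) (Sfin k).
have SC k : S k `<=` \bigcup_i C k i by case: (Ck k).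
have Cd k i : diam rho (C k i) <= d%:E by case: (Ck k).
have CS k : \sum_(0 <= i <oo) diam rho (C k i) <=
    hausdorff1_delta rho d (S k) + (e / (2 ^ k.+1)%:R)%:E by case: (Ck k).
have /ppcard_eqP[p] : ([set: nat] #= [set: nat * nat])%card.
  by rewrite card_eq_sym; exact: card_nat2.
have diamC0 k i : 0 <= diam rho (C k i) by exact: diam_ge0.
apply: le_trans (@hausdorff1_delta_le_cover d _ (fun n => C (p n).1 (p n).2) _ _) _.
- move=> x [k _ /SC[i _ Cx]].
  by have [n _ pn] := (@surj _ _ _ _ p) (k, i) I; exists n => //; rewrite pn.
- by move=> n; exact: Cd.
rewrite nneseries_esumT//.
rewrite -(reindex_esum [set: nat] [set: nat * nat] p (fun q => diam rho (C q.1 q.2)))//.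
rewrite (_ : [set: nat * nat] = [set: nat] `*`` (fun=> [set: nat])); last first.
  by apply/seteqP; split.
rewrite -(@esum_esum _ _ _ [set: nat] (fun=> [set: nat]) (fun k i => diam rho (C k i)))//.
rewrite -nneseries_esumT; last by move=> n; exact: esum_ge0.
apply: le_trans (epsilon_trick _ H0 (ltW e0)).
apply: lee_nneseries => [n _ _|k _]; first exact: esum_ge0.
by rewrite -nneseries_esumT.
Qed.

Lemma hausdorff1_delta_setU (d : R) (S T : set M) : (0 <= d)%R ->
  hausdorff1_delta rho d (S `|` T) <=
  hausdorff1_delta rho d S + hausdorff1_delta rho d T.
Proof.
move=> d0; rewrite -bigcup2E.
apply: le_trans (hausdorff1_delta_sigma_subadditive _ _) _.
rewrite (nneseries_split 0 2); last by move=> *; exact: hausdorff1_delta_ge0.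
rewrite eseries0 ?adde0; last by move=> [|[|i]] //= _ _; exact: hausdorff1_delta_set0.
by rewrite big_nat_recr//= big_nat_recr//= big_geq// add0e.
Qed.

End hausdorff_content.

Definition lipschitz_at {R : realType} {M : Type} (rho : M -> M -> R)
    (f : R -> M) (a b c x : R) : Prop :=
  exists2 r : R, 0 < r & forall y, a <= y <= b -> `|y - x| < r ->
    rho (f y) (f x) <= c * `|y - x|.

Section lipschitz_at.
Context {R : realType} {M : Type} {rho : M -> M -> R} {f : R -> M} {a b : R}.
Hypothesis hrho : is_metric rho.

Lemma lipschitz_at_le {c c' x : R} : c <= c' ->
  lipschitz_at rho f a b c x -> lipschitz_at rho f a b c' x.
Proof.
move=> cc' [r r0 fr]; exists r => // y yab yx.
by apply: le_trans (fr y yab yx) _; rewrite ler_wpM2r.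
Qed.

Lemma lipschitz_at_degenerate {c x : R} : b <= a -> a <= x <= b ->
  lipschitz_at rho f a b c x.
Proof.
move=> ba xab; exists 1 => // y yab _.
have -> : y = x by apply/eqP; rewrite eq_le; apply/andP; split; lra.
by case: hrho => _ [rho0 _]; rewrite (proj2 (rho0 _ _))// subrr normr0 mulr0.
Qed.

Lemma metric_derivative_ge0 {x L : R} : a < b -> a <= x <= b ->
  has_metric_derivative rho f a b x L -> 0 <= L.
Proof.
move=> ab xab mdL; rewrite leNgt; apply/negP => L0.
have [r r0 fr] := mdL (- L) ltac:(lra).
pose h := Num.min (r / 2) ((b - a) / 2).
have h0 : 0 < h by rewrite lt_min; apply/andP; split; lra.
have hr : h < r by rewrite gt_min; apply/orP; left; lra.
have hba : h <= (b - a) / 2 by rewrite ge_min lexx orbT.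
have [t [t0 tab tr]] : exists t, [/\ t != 0, a <= x + t <= b & `|t| < r].
  have [xhb|xhb] := leP (x + h) b.
    by exists h; rewrite gt_eqF// gtr0_norm//; split=> //; apply/andP; split; lra.
  exists (- h); rewrite oppr_eq0 gt_eqF// normrN gtr0_norm//.
  by split=> //; apply/andP; split; lra.
have := fr t t0 tab tr; rewrite ltr_norml => /andP[_].
have : 0 <= rho (f (x + t)) (f x) / `|t| by rewrite divr_ge0//; case: hrho.
lra.
Qed.

Lemma lipschitz_at_metric_derivative {x L eps : R} : 0 < eps ->
  has_metric_derivative rho f a b x L -> lipschitz_at rho f a b (L + eps) x.
Proof.
move=> eps0 mdL; have [r r0 fr] := mdL eps eps0; exists r => // y yab yx.
have [->|yx0] := eqVneq y x.
  by case: hrho => _ [rho0 _]; rewrite (proj2 (rho0 _ _))// subrr normr0 mulr0.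
have nyx : 0 < `|y - x| by rewrite normr_gt0 subr_eq0.
have := fr (y - x); rewrite subr_eq0 addrC subrK => /(_ yx0 yab yx).
rewrite ltr_norml => /andP[_].
by rewrite ltrBlDl ltr_pdivrMr// => /ltW; rewrite mulrC addrC.
Qed.

End lipschitz_at.

Section null_image.
Context {R : realType} {M : Type} (rho : M -> M -> R) (f : R -> M).
Local Open Scope ereal_scope.

Lemma diam_image_itv_le (A : set R) (c h p q : R) : (0 <= c)%R ->
  wlength (@idfun R) `]p, q[ <= h%:E ->
  (forall x y, A x -> A y -> (`|y - x| < h)%R -> (rho (f y) (f x) <= c * `|y - x|)%R) ->
  diam rho (f @` (A `&` `]p, q[)) <= c%:E * wlength (@idfun R) `]p, q[.
Proof.
move=> c0; rewrite wlength_itv /= lte_fin; case: ltP => [pq qph Alip|qp _ _].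
  rewrite -EFinD -EFinM; apply: diam_le; first by rewrite mulr_ge0// subr_ge0 ltW.
  move=> _ _ [u [Au Iu] <-] [v [Av Iv] <-].
  move: Iu Iv; rewrite /= !in_itv/= => /andP[pu uq]; case/andP => pv vq.
  have uv : (`|u - v| < q - p)%R by rewrite ltr_norml; apply/andP; split; lra.
  apply: le_trans (Alip v u Av Au _) _; first by apply: lt_le_trans uv _; rewrite -lee_fin EFinD.
  by rewrite ler_wpM2l// ltW.
rewrite mule0 (_ : _ @` _ = set0) ?diam_set0//; apply/seteqP; split=> // y [x [_ Ix] _].
by move: Ix; rewrite /= in_itv/= => /andP[px xq]; move: (lt_trans px xq); rewrite ltNge qp.
Qed.

Lemma hausdorff1_delta_image_null_uniform (A : set R) (c h d : R) :
  (0 < d)%R -> (0 <= c)%R -> (0 < h)%R -> ((wlength (@idfun R))^* A)%mu = 0 ->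
  (forall x y, A x -> A y -> (`|y - x| < h)%R -> (rho (f y) (f x) <= c * `|y - x|)%R) ->
  hausdorff1_delta rho d (f @` A) = 0.
Proof.
move=> d0 c0 h0 A0 Alip; apply/eqP; rewrite eq_le hausdorff1_delta_ge0 andbT.
apply/lee_addgt0Pr => e e0; rewrite add0e.
have c1 : (0 < c + 1)%R by rewrite ltr_wpDl.
pose l := Num.min h (Num.min (d / (c + 1)) (e / (c + 1)))%R.
have l0 : (0 < l)%R by rewrite !lt_min h0 !divr_gt0.
have lh : (l <= h)%R by rewrite ge_min lexx.
have ld : (l * (c + 1) <= d)%R by rewrite -ler_pdivlMr// !ge_min lexx orbT.
have le : (l * (c + 1) <= e)%R by rewrite -ler_pdivlMr// !ge_min lexx !orbT.
have : ((wlength (@idfun R))^* A)%mu \is a fin_num by rewrite A0.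
rewrite outer_measure_open_itv_cover => /(lb_ereal_inf_adherent l0)[_ [F [Fitv AF] <-]].
rewrite -outer_measure_open_itv_cover A0 add0e => Fl.
have F0 k : 0 <= wlength (@idfun R) (F k) by exact: wlength_ge0.
have Fl' k : wlength (@idfun R) (F k) <= l%:E := le_trans (nneseries_ge_term k F0) (ltW Fl).
have diamF k : diam rho (f @` (A `&` F k)) <= c%:E * wlength (@idfun R) (F k).
  have [[p q] /= Fpq] := Fitv k; move: (Fl' k); rewrite Fpq => Fpql.
  by apply: (@diam_image_itv_le _ c h) => //; apply: le_trans Fpql _; rewrite lee_fin.
apply: le_trans (@hausdorff1_delta_le_cover _ _ _ _ _ (fun k => f @` (A `&` F k)) _ _) _.
- by move=> _ [x Ax <-]; have [k _ Fx] := AF _ Ax; exists k => //; exists x.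
- move=> k; apply: le_trans (diamF k) _; apply: le_trans (lee_wpmul2l _ (Fl' k)) _.
    by rewrite lee_fin.
  by rewrite -EFinM lee_fin; nra.
apply: le_trans (lee_nneseries (fun k _ _ => diam_ge0 rho _) (fun k _ => diamF k)) _.
rewrite nneseriesZl//; apply: le_trans (lee_wpmul2l _ (ltW Fl)) _; first by rewrite lee_fin.
by rewrite -EFinM lee_fin; nra.
Qed.

Lemma hausdorff1_delta_image_null (a b c d : R) (N : set R) :
  (0 < d)%R -> (0 <= c)%R -> N `<=` `[a, b] -> ((wlength (@idfun R))^* N)%mu = 0 ->
  (forall x, N x -> lipschitz_at rho f a b c x) ->
  hausdorff1_delta rho d (f @` N) = 0.
Proof.
move=> d0 c0 Nab N0 Nlip.
pose N_ n := [set x | N x /\ forall y, (a <= y <= b)%R ->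
  (`|y - x| < n.+1%:R^-1)%R -> (rho (f y) (f x) <= c * `|y - x|)%R].
have NN : f @` N `<=` \bigcup_n f @` N_ n.
  move=> _ [x Nx <-]; have [r r0 fr] := Nlip x Nx.
  exists (Num.truncn r^-1) => //; exists x => //; split=> // y yab yx.
  apply: fr => //; apply: lt_trans yx _.
  by rewrite -[ltRHS]invrK ltf_pV2 ?posrE ?invr_gt0// truncnS_gt.
apply/eqP; rewrite eq_le hausdorff1_delta_ge0 andbT.
apply: le_trans (le_hausdorff1_delta rho d NN) _.
apply: le_trans (hausdorff1_delta_sigma_subadditive _ _ _) _.
rewrite eseries0// => n _ _.
apply: (@hausdorff1_delta_image_null_uniform _ c n.+1%:R^-1) => //.
- apply/eqP; rewrite eq_le outer_measure_ge0 andbT -N0.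
  by apply: le_outer_measure => x [].
- move=> x y [_ fx] [Ny _]; apply: fx.
  by have := Nab _ Ny; rewrite /= in_itv.
Qed.

End null_image.

(* Balls with rational centre and positive rational radius, enumerated through
   [unpickle] (codes of nonpositive radii get the junk radius 1): the library's
   Vitali covering theorem is stated for nat-indexed families of balls. *)
Definition rat_ball_code (n : nat) : rat * rat := odflt (0, 1) (unpickle n).

Definition rat_center (R : realType) (n : nat) : R := ratr (rat_ball_code n).1.

Definition rat_radius (R : realType) (n : nat) : R :=
  if 0 < ratr (rat_ball_code n).2 :> R then ratr (rat_ball_code n).2 else 1.

Definition rat_ball (R : realType) (n : nat) : set R :=
  ball (rat_center R n) (rat_radius R n).

Section rat_ball.
Variable R : realType.

Lemma rat_radius_gt0 n : 0 < rat_radius R n.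
Proof. by rewrite /rat_radius; case: ifPn. Qed.

Lemma radius_rat_ball n : (radius (rat_ball R n))%:num = rat_radius R n.
Proof. by rewrite radius_ball_num// ltW// rat_radius_gt0. Qed.

Lemma closure_rat_ballE n :
  closure (rat_ball R n) = [set y | `|rat_center R n - y| <= rat_radius R n].
Proof. by rewrite closure_ballE closed_ballE// rat_radius_gt0. Qed.

Lemma lebesgue_measure_closure_rat_ball n :
  lebesgue_measure (closure (rat_ball R n)) = (rat_radius R n *+ 2)%:E.
Proof. by rewrite closure_ballE lebesgue_measure_closed_ball// ltW// rat_radius_gt0. Qed.

(* The slack [c < c'] absorbs the distance between [x] and the rational centre. *)
Lemma rat_ball_near (x : R) {e c c' : R} : 0 < e -> 0 <= c -> c < c' ->
  exists n, [/\ rat_ball R n x, rat_radius R n < e &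
    forall y, closure (rat_ball R n) y ->
      `|x - y| < e /\ c * `|y - x| <= c' * rat_radius R n].
Proof.
move=> e0 c0 cc'.
have [s] := @rat_in_itvoo R 0 (e / 2) ltac:(lra); rewrite in_itv/= => /andP[s0 se].
pose th := (c' - c) / (c' + 1).
have th0 : 0 < th by rewrite divr_gt0; lra.
have th1 : th < 1 by rewrite ltr_pdivrMr; lra.
have cth : c * th <= c' - c.
  by rewrite mulrA ler_pdivrMr; [nra|lra].
have [t] := @rat_in_itvoo R (x - ratr s * th) (x + ratr s * th) ltac:(nra).
rewrite in_itv/= => /andP[t1 t2].
have tx : `|ratr t - x| < ratr s * th by rewrite ltr_distlC; apply/andP; split; lra.
have rE : rat_radius R (pickle (t, s)) = ratr s.
  by rewrite /rat_radius /rat_ball_code pickleK/= s0.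
have cE : rat_center R (pickle (t, s)) = ratr t.
  by rewrite /rat_center /rat_ball_code pickleK.
exists (pickle (t, s)); rewrite closure_rat_ballE /rat_ball rE cE; split.
- by rewrite /ball/=; apply: lt_trans tx _; nra.
- lra.
- move=> y /= ty; have yx : `|y - x| <= ratr s + ratr s * th.
    rewrite -(subrK (ratr t) y) -addrA; apply: le_trans (ler_normD _ _) _.
    by rewrite distrC lerD// ltW.
  by rewrite distrC; split; nra.
Qed.

End rat_ball.

Section vitali_image.
Context {R : realType} {M : Type} {rho : M -> M -> R} {f : R -> M} {a b : R}.
Hypothesis hrho : is_metric rho.
Local Open Scope ereal_scope.

Lemma vitali_cover_image_rat_ball {A U : set R} {c : R} (c' : R) {d : R} :
  (0 < d)%R -> (0 <= c)%R -> (c < c')%R -> open U -> A `<=` U -> A `<=` `[a, b] ->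
  (forall x, A x -> lipschitz_at rho f a b c x) ->
  vitali_cover A (rat_ball R) [set n | closure (rat_ball R n) `<=` U /\
    (c' * (rat_radius R n *+ 2) <= d)%R /\
    diam rho (f @` (A `&` closure (rat_ball R n))) <= (c' * (rat_radius R n *+ 2))%:E].
Proof.
move=> d0 c0 cc' oU AU Aab Alip; split=> [n|x Ax e e0]; first exact: is_ball_ball.
have c'0 : (0 < c')%R by apply: le_lt_trans cc'.
have [r r0 fr] := Alip x Ax.
have /nbhs_ballP[eU eU0 xU] := oU x (AU x Ax).
pose e' := Num.min (Num.min e r) (Num.min eU (d / (c' *+ 2)))%R.
have e'0 : (0 < e')%R by rewrite !lt_min e0 r0 eU0 divr_gt0// mulrn_wgt0.
have [n [xn ne' nearn]] := rat_ball_near R x e'0 c0 cc'.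
have [e'e e'r e'U e'd] : [/\ e' <= e, e' <= r, e' <= eU & e' <= d / (c' *+ 2)]%R.
  by rewrite !ge_min !lexx !orbT.
exists n; split=> //; last by rewrite radius_rat_ball; exact: lt_le_trans e'e.
split; [|split].
- by move=> y /nearn[xy _]; apply: xU; rewrite /ball/=; apply: lt_le_trans e'U.
- rewrite mulrnAr -mulrnAl mulrC -ler_pdivlMr ?mulrn_wgt0//; apply: ltW.
  exact: lt_le_trans e'd.
- rewrite mulrnAr; apply: (diam_le_ball rho (f x) hrho).
    by rewrite mulr_ge0 ?ltW ?rat_radius_gt0.
  move=> _ [y [Ay /nearn[xy cyx]] <-]; apply: le_trans cyx.
  apply: fr; first by have := Aab _ Ay; rewrite /= in_itv.
  by rewrite distrC; apply: lt_le_trans e'r.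
Qed.

Lemma hausdorff1_delta_image_le (A : set R) (c c' d eta : R) :
  (0 < d)%R -> (0 <= c)%R -> (c < c')%R -> (0 < eta)%R -> A `<=` `[a, b] ->
  (forall x, A x -> lipschitz_at rho f a b c x) ->
  hausdorff1_delta rho d (f @` A) <=
    c'%:E * ((wlength (@idfun R))^* A)%mu + eta%:E.
Proof.
move=> d0 c0 cc' eta0 Aab Alip.
have c'0 : (0 < c')%R by apply: le_lt_trans cc'.
have [U [oU AU Ule]] := outer_measure_open_le A (divr_gt0 eta0 c'0).
have rpos n : (0 < (radius (rat_ball R n))%:num)%R.
  by rewrite radius_rat_ball rat_radius_gt0.
have [D [_ DV trivD nullZ]] := vitali_theorem rpos
  (vitali_cover_image_rat_ball c' d0 c0 cc' oU AU Aab Alip).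
pose Z := A `\` \bigcup_(k in D) closure (rat_ball R k).
pose S n := if n \in D then f @` (A `&` closure (rat_ball R n)) else set0.
have fAS : f @` A `<=` (\bigcup_n S n) `|` f @` Z.
  move=> _ [x Ax <-].
  have [[k Dk kx]|nkx] := pselect ((\bigcup_(k in D) closure (rat_ball R k)) x).
    by left; exists k => //; rewrite /S ifT ?inE//; exists x.
  by right; exists x.
have fZ0 : hausdorff1_delta rho d (f @` Z) = 0.
  apply: (@hausdorff1_delta_image_null _ _ rho f a b c) => //.
  - by move=> x [Ax _]; exact: Aab.
  - by move=> x [Ax _]; exact: Alip.
have diamS n : diam rho (S n) <=
    c'%:E * (if n \in D then lebesgue_measure (closure (rat_ball R n)) else 0) /\
  diam rho (S n) <= d%:E.
  rewrite /S; case: ifPn => [/set_mem/DV[_ [rd diamn]]|_].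
    by rewrite lebesgue_measure_closure_rat_ball -EFinM; split=> //; exact: le_trans diamn _.
  by rewrite diam_set0 mule0; split=> //; rewrite lee_fin ltW.
apply: le_trans (le_hausdorff1_delta rho d fAS) _.
apply: le_trans (hausdorff1_delta_setU rho d _ _ (ltW d0)) _.
rewrite fZ0 adde0.
apply: le_trans (hausdorff1_delta_le_cover rho d _ S (fun x => id) (fun n => proj2 (diamS n))) _.
apply: le_trans (lee_nneseries (fun n _ _ => diam_ge0 rho _) (fun n _ => proj1 (diamS n))) _.
rewrite nneseriesZl; last by move=> n _; case: ifPn => // _; exact: measure_ge0.
rewrite -eseries_mkcond -measure_bigcup//; last first.
  by move=> n _; rewrite closure_ballE; exact: measurable_closed_ball.
have DU : lebesgue_measure (\bigcup_(k in D) closure (rat_ball R k)) <= lebesgue_measure U.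
  by apply: le_outer_measure; apply: bigcup_sub => k /DV[].
apply: le_trans (lee_wpmul2l _ (le_trans DU Ule)) _; first by rewrite lee_fin ltW.
rewrite ge0_muleDr; [|exact: outer_measure_ge0|by rewrite lee_fin divr_ge0// ltW].
by rewrite -EFinM mulrC divfK ?gt_eqF.
Qed.

End vitali_image.

Lemma completed_lebesgue_measure_le_itv {R : realType} {A : set (lebType R)} {a b : R} :
  A `<=` `[a, b] -> (completed_lebesgue_measure A <= lebesgue_measure (`[a, b] : set R))%E.
Proof. exact: (le_outer_measure ((wlength idfun)^*)%mu). Qed.

Section slice.
Context {R : realType}.
Variables (A : set (lebType R)) (g : R -> R) (eps : R).
Hypotheses (mA : measurable A) (mg : measurable_fun A g)
  (g0 : forall x, A x -> 0 <= g x) (eps0 : 0 < eps).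
Local Notation mu := (@completed_lebesgue_measure R).
Local Open Scope ereal_scope.

Definition slice (j : nat) : set (lebType R) :=
  A `&` g @^-1` `[(j%:R * eps)%R, (j.+1%:R * eps)%R[.

Lemma measurable_slice j : measurable (slice j).
Proof. by apply: mg => //; exact: measurable_itv. Qed.

Lemma truncn_slice x j : slice j x -> Num.truncn (g x / eps) = j.
Proof.
move=> [_ /=]; rewrite in_itv/= => /andP[gj gj1].
by apply: truncn_def; rewrite ler_pdivlMr// ltr_pdivrMr// gj gj1.
Qed.

Lemma trivIset_slice : trivIset setT slice.
Proof.
apply/trivIsetP => i j _ _ /eqP ij; apply/seteqP; split=> // x [/truncn_slice xi].
by move/truncn_slice; rewrite xi.
Qed.

Lemma bigcup_slice : \bigcup_j slice j = A.
Proof.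
apply/seteqP; split=> [x [j _ []]//|x Ax].
exists (Num.truncn (g x / eps)) => //; split=> //=; rewrite in_itv/=.
have := truncn_itv (divr_ge0 (g0 x Ax) (ltW eps0)).
by rewrite ler_pdivlMr// ltr_pdivrMr.
Qed.

Lemma integral_slices :
  \int[mu]_(x in A) (g x)%:E = \sum_(0 <= j <oo) \int[mu]_(x in slice j) (g x)%:E.
Proof.
rewrite -[in LHS]bigcup_slice; apply: ge0_integral_bigcup => //.
- exact: measurable_slice.
- by rewrite bigcup_slice; exact/measurable_EFinP.
- by rewrite bigcup_slice => x Ax; rewrite lee_fin g0.
- exact: trivIset_slice.
Qed.

Lemma measure_slices : mu A = \sum_(0 <= j <oo) mu (slice j).
Proof.
rewrite -[in LHS]bigcup_slice measure_bigcup; last 2 first.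
- by move=> j _; exact: measurable_slice.
- exact: trivIset_slice.
by rewrite nneseries_esumT// nneseries_esum// set_mem_set.
Qed.

Lemma integral_slice_ge j :
  (j%:R * eps)%:E * mu (slice j) <= \int[mu]_(x in slice j) (g x)%:E.
Proof.
rewrite -integral_cst; last exact: measurable_slice.
apply: ge0_le_integral => //.
- exact: measurable_slice.
- by move=> x _; rewrite lee_fin mulr_ge0// ltW.
- apply/measurable_EFinP; apply: measurable_funS mg => //.
  by move=> x [].
- by move=> x [_ /=]; rewrite in_itv/= lee_fin => /andP[].
Qed.

End slice.

Section integral_estimate.
Context {R : realType} {M : Type} {rho : M -> M -> R} {f : R -> M} {a b : R}.
Hypothesis hrho : is_metric rho.
Local Notation mu := (@completed_lebesgue_measure R).
Local Open Scope ereal_scope.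

Lemma hausdorff1_delta_image_le_integral {A : set (lebType R)} {g : R -> R} {d e : R} :
  (0 < d)%R -> (0 < e)%R -> (a < b)%R -> measurable A -> A `<=` `[a, b] ->
  measurable_fun A g -> (forall x, A x -> (0 <= g x)%R) ->
  (forall x eps, A x -> (0 < eps)%R -> lipschitz_at rho f a b (g x + eps) x) ->
  hausdorff1_delta rho d (f @` A) <= \int[mu]_(x in A) (g x)%:E + e%:E.
Proof.
move=> d0 e0 ab mA Aab mg g0 glip.
(* The slices contribute the error [3 eps |A| + eps <= eps (3 (b - a) + 1)]. *)
pose eps := (e / (3 * (b - a) + 1))%R.
have eps0 : (0 < eps)%R by rewrite divr_gt0//; lra.
have muA : mu A <= (b - a)%:E.
  apply: le_trans (completed_lebesgue_measure_le_itv Aab) _.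
  by rewrite lebesgue_measure_itv/= lte_fin ab -EFinD.
have epsn n : (0 <= n%:R * eps)%R by rewrite mulr_ge0// ltW.
pose S := slice A g eps.
have slice_le j : hausdorff1_delta rho d (f @` S j) <=
    (j.+3%:R * eps)%:E * mu (S j) + (eps / (2 ^ j.+1)%:R)%:E.
  apply: (hausdorff1_delta_image_le hrho _ (j.+2%:R * eps)) => //.
  - by rewrite ltr_pM2r// ltr_nat.
  - by rewrite divr_gt0// ltr0n expn_gt0.
  - by move=> x [Ax _]; exact: Aab.
  move=> x [Ax /=]; rewrite in_itv/= => /andP[_ gx].
  apply: (lipschitz_at_le _ (glip x eps Ax eps0)).
  by rewrite -(natr1 j.+1) mulrDl mul1r lerD2r ltW.
have slice_int j : (j.+3%:R * eps)%:E * mu (S j) <=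
    \int[mu]_(x in S j) (g x)%:E + (3 * eps)%:E * mu (S j).
  rewrite -addn3 natrD mulrDl EFinD ge0_muleDl ?lee_fin ?epsn//.
  by apply: leeD2r; exact: integral_slice_ge.
have -> : f @` A = \bigcup_j f @` S j by rewrite -image_bigcup bigcup_slice.
apply: le_trans (hausdorff1_delta_sigma_subadditive _ _ _) _.
apply: le_trans (lee_nneseries (fun j _ _ => hausdorff1_delta_ge0 _ _ _)
  (fun j _ => slice_le j)) _.
apply: le_trans (epsilon_trick _ _ (ltW eps0)) _.
  by move=> j; rewrite mule_ge0// lee_fin.
apply: le_trans (leeD2r _ (lee_nneseries _ (fun j _ => slice_int j))) _.
  by move=> j _ _; rewrite mule_ge0// lee_fin.
rewrite nneseriesD; last 2 first.
- by move=> j _ _; apply: integral_ge0 => x [Ax _]; rewrite lee_fin g0.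
- by move=> j _ _; rewrite mule_ge0// lee_fin.
rewrite nneseriesZl// -measure_slices// -integral_slices// -addeA; apply: leeD2l.
apply: le_trans (leeD2r _ (lee_wpmul2l _ muA)) _; first by rewrite lee_fin mulr_ge0// ltW.
rewrite -EFinM -EFinD lee_fin.
have : (eps * (3 * (b - a) + 1) = e)%R by rewrite divfK// gt_eqF//; lra.
lra.
Qed.

End integral_estimate.

Theorem theorem2p4 (R : realType) (M : Type) (rho : M -> M -> R)
  (hrho : is_metric rho) (a b : R) (f : R -> M) (E : set (lebType R))
  (md : R -> R)
  (hEab : E `<=` `[a, b])
  (hEmeas : measurable E)
  (hmd : forall x, E x -> has_metric_derivative rho f a b x (md x))
  (hmdmeas : measurable_fun E md) :
  (hausdorff1 rho (f @` E) <=
     \int[@completed_lebesgue_measure R]_(x in E) (md x)%:E)%E.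
Proof.
apply: ge_ereal_sup => _ [d /= d0 <-].
have Eab x : E x -> a <= x <= b by move/hEab; rewrite /= in_itv.
have [ab|ba] := ltP a b.
  apply/lee_addgt0Pr => e e0.
  apply: (hausdorff1_delta_image_le_integral hrho d0 e0 ab) => //.
  - by move=> x Ex; exact: (metric_derivative_ge0 hrho ab (Eab x Ex) (hmd x Ex)).
  - by move=> x eps Ex eps0; exact: (lipschitz_at_metric_derivative hrho eps0 (hmd x Ex)).
have E0 : completed_lebesgue_measure E = 0%E.
  apply/eqP; rewrite eq_le measure_ge0 andbT.
  apply: le_trans (completed_lebesgue_measure_le_itv hEab) _.
  by rewrite lebesgue_measure_itv/= lte_fin ltNge ba.
rewrite null_set_integral//; last exact/measurable_EFinP.
rewrite (@hausdorff1_delta_image_null _ _ rho f a b 0) //.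
by move=> x Ex; exact: (lipschitz_at_degenerate hrho ba (Eab x Ex)).
Qed.
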